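(* Let $(X,\tau)$ be a $T_1$ topological space. Suppose that for every continuous map $f:(X,\tau)\to(\mathcal P(X),\tau_{\mathcal S(X)})$ with $x\in f(x)$ for all $x\in X$, there exist a continuous neighborhood refinement map $f_*$ of $f$ and a set $D\subseteq X$ such that the map $g:(X,\tau)\to(\mathcal P(D),\tau_{\mathcal S(D)})$, $g(x)=f_*(x)\cap D$, satisfies (1) $g^{-1}(\{\emptyset\})=\emptyset$, and (2) $\left|\bigcup_{y\in N^*(x)}g(y)\right|<\omega_0$ for all $x\in X$, where $N^*:X\to\tau$ is given by $N^*(a)=f_*^{-1}(\mathcal U_X(a))=\{x\in X: a\in f_*(x)\}$. Then $X$ is a paracompact D-space.
   Context: For a set $A$ and $a\in A$, $\mathcal U_A(a)=\{B\subseteq A: a\in B\}$; the principal ultrafilter topology $\tau_{\mathcal S(A)}$ on $\mathcal P(A)$ is generated by the subbase $\{\mathcal U_A(a): a\in A\}$. A continuous neighborhood refinement map of $f$ is a continuous map $f_*:(X,\tau)\to(\mathcal P(X),\tau_{\mathcal S(X)})$ with $x\in f_*(x)\subseteq f(x)$ for all $x$. Paracompact means every open cover has a locally finite open refinement (no Hausdorff assumption). An open neighborhood assignment is $N:X\to\tau$ with $x\in N(x)$; $X$ is a D-space if every open neighborhood assignment $N$ admits a closed discrete $D\subseteq X$ with $\bigcup_{d\in D}N(d)=X$. *)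

From mathcomp Require Import all_boot all_order.
From mathcomp Require Import all_classical all_reals all_analysis.
Set Implicit Arguments. Unset Strict Implicit. Unset Printing Implicit Defensive.
Local Open Scope classical_set_scope.

Section PUF.
Variable A : Type.

Definition U_ (a : A) : set (set A) := [set B | B a].

Definition is_topology (O : set (set (set A))) : Prop :=
  O setT /\
  (forall W1 W2, O W1 -> O W2 -> O (W1 `&` W2)) /\
  (forall F : set (set (set A)), F `<=` O -> O (\bigcup_(W in F) W)).

Definition gen_topology (S : set (set (set A))) : set (set (set A)) :=
  [set W | forall O, is_topology O -> S `<=` O -> O W].

Definition puf_open : set (set (set A)) := gen_topology [set U_ a | a in [set: A]].
End PUF.

Section Defs.
Variable X : topologicalType.

Definition puf_continuous (f : X -> set X) : Prop :=
  forall W, puf_open W -> open (f @^-1` W).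

Definition cont_nbhd_refinement (f fstar : X -> set X) : Prop :=
  puf_continuous fstar /\ (forall x, fstar x x /\ fstar x `<=` f x).

Definition open_cover (C : set (set X)) : Prop :=
  (forall U, C U -> open U) /\ \bigcup_(U in C) U = setT.

Definition refines (V C : set (set X)) : Prop :=
  forall v, V v -> exists2 U, C U & v `<=` U.

Definition locally_finite_family (V : set (set X)) : Prop :=
  forall x : X, exists W : set X, [/\ open W, W x &
     finite_set [set v | V v /\ v `&` W !=set0]].

(* paracompact (no Hausdorff assumption) *)
Definition paracompact : Prop :=
  forall C, open_cover C ->
    exists V, [/\ open_cover V, refines V C & locally_finite_family V].

Definition closed_discrete (D : set X) : Prop :=
  closed D /\ (forall d, D d -> exists W : set X, [/\ open W, W d & W `&` D = [set d]]).

Definition open_nbhd_assignment (N : X -> set X) : Prop :=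
  forall x, open (N x) /\ N x x.

Definition D_space : Prop :=
  forall N, open_nbhd_assignment N ->
    exists D, closed_discrete D /\ \bigcup_(d in D) N d = setT.
End Defs.

From mathcomp Require Import all_boot all_order.
From mathcomp Require Import all_classical all_reals all_analysis.
Local Open Scope classical_set_scope.
Set Implicit Arguments. Unset Strict Implicit. Unset Printing Implicit Defensive.

(* A map f : X -> P(X) is continuous for the principal ultrafilter topology
   exactly when every "star" [set x | f x a] is open, so open neighborhood
   assignments N and continuous maps with x in f x are the same data up to
   transposition.  Applying the hypothesis to the transpose of an open cover
   (indexed by a chosen member containing each point), resp. of an open
   neighborhood assignment, yields a refinement f* and a set D such that the
   stars of f* at the points of D cover X, each lies in f, and every star
   meets D in finitely many points.  The stars indexed by D are then a locally
   finite open refinement of the cover, and D is a kernel for the assignment;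
   in a T1 space, finite traces on open neighborhoods make D closed discrete. *)

Lemma puf_continuousP (X : topologicalType) (f : X -> set X) :
  puf_continuous f <-> forall a, open [set x | f x a].
Proof.
split=> [hf a | hf W hW]; first by apply: (hf (U_ a)) => O _; apply; exists a.
apply: (hW [set W | open (f @^-1` W)]); last by move=> _ [a _ <-]; exact: hf.
split; first exact: openT.
split; first by move=> W1 W2 o1 o2 /=; rewrite preimage_setI; exact: openI.
by move=> F FO /=; rewrite preimage_bigcup; apply: bigcup_open => i /FO.
Qed.

Lemma open_setD_finite (X : topologicalType) (W F : set X) :
  accessible_space X -> open W -> finite_set F -> open (W `\` F).
Proof.
move=> hT1 oW fF; apply: openI oW (closed_openC _).
exact: (proj1 (@accessible_finite_set_closed X) hT1).
Qed.

Lemma closed_discrete_finite_traces (X : topologicalType) (W : X -> set X)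
    (D : set X) :
  accessible_space X -> open_nbhd_assignment W ->
  (forall x, finite_set (D `&` W x)) -> closed_discrete D.
Proof.
move=> hT1 hW finW; split.
- rewrite -openC.
  have -> : ~` D = \bigcup_(x in ~` D) (W x `\` (D `&` W x)).
    apply/seteqP; split=> [x nDx | x [y _ [Wyx nDWyx]] Dx].
      by exists x => //; split; [exact: (proj2 (hW x)) | case].
    by apply: nDWyx.
  apply: bigcup_open => x _; apply: open_setD_finite => //; exact: (proj1 (hW x)).
- move=> d Dd; exists (W d `\` ((D `&` W d) `\ d)); split.
  + apply: open_setD_finite => //; first exact: (proj1 (hW d)).
    exact: sub_finite_set (@subDsetl _ _ _) (finW d).
  + by split; [exact: (proj2 (hW d)) | move=> [_]; apply].
  + apply/seteqP; split=> [z [[Wdz nz] Dz] | z /= ->].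
      by apply: contrapT => zd; apply: nz; split; [split|].
    by split=> //; split; [exact: (proj2 (hW d)) | move=> [_]; apply].
Qed.

Section StarRefinement.
Variables (X : topologicalType) (f fstar : X -> set X) (D : set X).
Hypothesis refine_f : cont_nbhd_refinement f fstar.
Hypothesis meets_D : forall x, fstar x `&` D <> set0.
Hypothesis finite_over_star :
  forall x, finite_set (\bigcup_(y in [set z | fstar z x]) (fstar y `&` D)).

Let star (a : X) : set X := [set z | fstar z a].

Lemma star_nbhd_assignment : open_nbhd_assignment star.
Proof.
move=> a; split; first exact: (proj1 (puf_continuousP fstar) (proj1 refine_f) a).
exact: (proj1 (proj2 refine_f a)).
Qed.

Lemma star_sub_f a : star a `<=` [set z | f z a].
Proof. by move=> z; exact: (proj2 (proj2 refine_f z)). Qed.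

Lemma bigcup_star_D : \bigcup_(d in D) star d = setT.
Proof.
apply/seteqP; split=> // x _.
have [d [fxd Dd]] : fstar x `&` D !=set0 by apply/set0P/eqP; exact: meets_D.
by exists d.
Qed.

Lemma finite_D_star x : finite_set (D `&` star x).
Proof.
apply: sub_finite_set (finite_over_star x) => d [Dd fdx].
by exists d => //; split => //; exact: (proj2 (star_nbhd_assignment d)).
Qed.

Lemma star_locally_finite : locally_finite_family (star @` D).
Proof.
move=> x; exists (star x); split; [exact: (proj1 (star_nbhd_assignment x)) |
                                    exact: (proj2 (star_nbhd_assignment x)) |].
apply: sub_finite_set (finite_image star (finite_over_star x)).
move=> _ [[d Dd <-] [y [/= fyd fyx]]].
by exists d => //; exists y.
Qed.

End StarRefinement.

Theorem mainTheorem7 (X : topologicalType) (hT1 : accessible_space X) :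
  (forall f : X -> set X, puf_continuous f -> (forall x, f x x) ->
     exists (fstar : X -> set X) (D : set X),
       cont_nbhd_refinement f fstar /\
       (* g x := fstar x `&` D ; N* a := [set x | fstar x a] *)
       (forall x, fstar x `&` D <> set0) /\
       (forall x, finite_set (\bigcup_(y in [set z | fstar z x]) (fstar y `&` D)))) ->
  paracompact X /\ D_space X.
Proof.
move=> H; split.
- move=> C [Copen Ccov].
  have cover_pt x : exists U, C U /\ U x.
    have : (\bigcup_(U in C) U) x by rewrite Ccov.
    by case=> U CU Ux; exists U.
  have [U hU] := choice cover_pt.
  have [||fs [D [fr [hne hfin]]]] := H (fun x => [set a | U a x]).
  + by apply/puf_continuousP => a; exact: Copen (proj1 (hU a)).
  + by move=> x; exact: (proj2 (hU x)).
  exists ((fun d => [set z | fs z d]) @` D); split.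
  + split; last by rewrite (bigcup_image D _ id); exact: bigcup_star_D hne.
    by move=> _ [d _ <-]; exact: (proj1 (star_nbhd_assignment fr d)).
  + by move=> _ [d _ <-]; exists (U d); [exact: (proj1 (hU d)) | exact: (star_sub_f fr)].
  + exact: star_locally_finite fr hfin.
- move=> N hN.
  have [||fs [D [fr [hne hfin]]]] := H (fun x => [set a | N a x]).
  + by apply/puf_continuousP => a; exact: (proj1 (hN a)).
  + by move=> x; exact: (proj2 (hN x)).
  exists D; split.
  + exact: closed_discrete_finite_traces hT1 (star_nbhd_assignment fr) (finite_D_star fr hfin).
  + apply/seteqP; split=> // x _.
    have : (\bigcup_(d in D) [set z | fs z d]) x by rewrite (bigcup_star_D hne).
    by case=> d Dd fxd; exists d => //; exact: (star_sub_f fr (a:=d) fxd).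
Qed.
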